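(* Let $K$ be a field of characteristic $0$, let $E$ be the infinite-dimensional unitary Grassmann algebra over $K$ with even part $E_0$, let $A=\begin{pmatrix} E_0 & E\\ 0 & E\end{pmatrix}$, and for $k\geq1$ let $F_k(A)=K\langle x_1,\dots,x_k\rangle/(K\langle x_1,\dots,x_k\rangle\cap T(A))$. If $n\geq 2$ is even, then the polynomial \[[x_1,x_2][x_3,x_4]\cdots[x_{n+3},x_{n+4}]\] is a polynomial identity of both $F_n(A)$ and $F_{n+1}(A)$.
   Context: All algebras are associative and unitary over $K$; $K\langle X\rangle$ is the free unitary associative algebra on $X=\{x_1,x_2,\dots\}$, and $T(A)$ is the ideal of polynomial identities of $A$. $E$ is generated by anticommuting $e_1,e_2,\dots$ and $E_0$ is the span of basis products of even length. $[a,b]=ab-ba$. *)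

From mathcomp Require Import all_boot all_order all_algebra.
Set Implicit Arguments. Unset Strict Implicit. Unset Printing Implicit Defensive.
Import GRing.Theory.
Local Open Scope ring_scope.

Section Defs.
Variable K : fieldType.

(* An element is a formal K-linear combination of words e_{i1}...e_{ir}   *)
(* in the generators e_0, e_1, ... (a word is a seq nat, the empty word   *)
(* is the unit).  It is read modulo the defining relations of E          *)
(* (e_i e_j = - e_j e_i, hence e_i^2 = 0): a word with a repeated letter *)
(* is 0, and a word without repetition equals (-1)^(#inversions) times   *)
(* the basis product indexed by its sorted version.  The coefficient of  *)
(* x on the basis element e_S (S a strictly increasing seq) is gcoef x S.*)
Definition grass := seq (seq nat * K).

Definition gadd (x y : grass) : grass := x ++ y.
Definition gopp (x : grass) : grass := [seq (p.1, - p.2) | p <- x].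
Definition gconst (c : K) : grass := [:: ([::], c)].
Definition gmul (x y : grass) : grass :=
  [seq (p.1 ++ q.1, p.2 * q.2) | p <- x, q <- y].

Fixpoint ginv (w : seq nat) : nat :=
  if w is a :: w' then (count (fun b => b < a)%N w' + ginv w')%N else 0%N.

Definition gsign (w : seq nat) : K := (-1) ^+ ginv w.

Definition gcoef (x : grass) (S : seq nat) : K :=
  \sum_(p <- x | uniq p.1 && (sort leq p.1 == S)) gsign p.1 * p.2.

Definition gzero (x : grass) : Prop := forall S, gcoef x S = 0.

Definition geven (x : grass) : Prop := forall S, odd (size S) -> gcoef x S = 0.

(* The algebra A = [[E_0, E], [0, E]] of upper triangular 2x2 matrices.   *)
Record tri := Tri { t11 : grass; t12 : grass; t22 : grass }.

Definition tadd (a b : tri) : tri :=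
  Tri (gadd (t11 a) (t11 b)) (gadd (t12 a) (t12 b)) (gadd (t22 a) (t22 b)).
Definition topp (a : tri) : tri := Tri (gopp (t11 a)) (gopp (t12 a)) (gopp (t22 a)).
Definition tconst (c : K) : tri := Tri (gconst c) [::] (gconst c).
Definition tmul (a b : tri) : tri :=
  Tri (gmul (t11 a) (t11 b))
      (gadd (gmul (t11 a) (t12 b)) (gmul (t12 a) (t22 b)))
      (gmul (t22 a) (t22 b)).

Definition inA (a : tri) : Prop := geven (t11 a).
Definition tzero (a : tri) : Prop := [/\ gzero (t11 a), gzero (t12 a) & gzero (t22 a)].

(* Elements of the free unitary associative algebra K<X>, X = {x_1,x_2,..}*)
(* given as expressions (every polynomial is represented by such a term;  *)
(* x_i is NVar i).                                                       *)
Inductive ncterm :=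
| NVar of nat
| NConst of K
| NAdd of ncterm & ncterm
| NOpp of ncterm
| NMul of ncterm & ncterm.

Fixpoint evalA (v : nat -> tri) (t : ncterm) : tri :=
  match t with
  | NVar i => v i
  | NConst c => tconst c
  | NAdd t1 t2 => tadd (evalA v t1) (evalA v t2)
  | NOpp t1 => topp (evalA v t1)
  | NMul t1 t2 => tmul (evalA v t1) (evalA v t2)
  end.

Fixpoint nsubst (s : nat -> ncterm) (t : ncterm) : ncterm :=
  match t with
  | NVar i => s i
  | NConst c => NConst c
  | NAdd t1 t2 => NAdd (nsubst s t1) (nsubst s t2)
  | NOpp t1 => NOpp (nsubst s t1)
  | NMul t1 t2 => NMul (nsubst s t1) (nsubst s t2)
  end.

Fixpoint nvars_in (k : nat) (t : ncterm) : bool :=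
  match t with
  | NVar i => (1 <= i <= k)%N
  | NConst _ => true
  | NAdd t1 t2 => nvars_in k t1 && nvars_in k t2
  | NOpp t1 => nvars_in k t1
  | NMul t1 t2 => nvars_in k t1 && nvars_in k t2
  end.

Definition in_TA (t : ncterm) : Prop :=
  forall v : nat -> tri, (forall i, inA (v i)) -> tzero (evalA v t).

(* f is a polynomial identity of F_k(A) = K<x_1..x_k> / (K<x_1..x_k> ∩ T(A)):
   for all elements u_i = p_i + (K<x_1..x_k> ∩ T(A)) of F_k(A)
   (p_i ∈ K<x_1..x_k>), f(u_1, u_2, ...) = 0 in F_k(A), i.e.
   f(p_1, p_2, ...) ∈ T(A). *)
Definition PI_of_F (k : nat) (f : ncterm) : Prop :=
  forall s : nat -> ncterm, (forall i, nvars_in k (s i)) -> in_TA (nsubst s f).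

Definition ncomm (a b : ncterm) : ncterm := NAdd (NMul a b) (NOpp (NMul b a)).

(* [x_1,x_2][x_3,x_4]...[x_{2m-1},x_{2m}] (preceded by the unit factor 1) *)
Fixpoint cprod (m : nat) : ncterm :=
  if m is m'.+1 then
    NMul (cprod m') (ncomm (NVar (2 * m').+1) (NVar (2 * m').+2))
  else NConst 1.

End Defs.

From mathcomp Require Import all_boot all_order all_algebra.
From mathcomp Require Import zify.
Set Implicit Arguments. Unset Strict Implicit. Unset Printing Implicit Defensive.
Import GRing.Theory.
Local Open Scope ring_scope.

(* Represent E faithfully by matrices (its left regular action on finite
   exterior algebras) and evaluate in A.  For a substitution in k variables,
   split the (2,2) entry of the value of x_i as c_i + z_i with c_i even, hence
   central, and z_i odd; the z_i anticommute and square to 0, so a product of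
   more than k of them vanishes.  The (1,1) entries are even, so every
   commutator has (1,1) entry 0, while its (2,2) entry has degree >= 2 in the
   z_i.  Hence a product of m + 1 commutators has (1,1) entry 0 and (1,2),
   (2,2) entries with a factor of degree >= 2m in the z_i, which vanish once
   2m > k; for n even take m = n/2 + 1, so that 2m = n + 2 > n + 1. *)

Section ZMonomials.
Variables (R : pzRingType) (z : nat -> R).
Hypotheses (zA : forall i j, z i * z j = - (z j * z i))
  (zz : forall i, z i * z i = 0).

Definition zprod (s : seq nat) : R := \prod_(j <- s) z j.

Lemma zprod_nil : zprod [::] = 1.
Proof. exact: big_nil. Qed.

Lemma zprod_cons j s : zprod (j :: s) = z j * zprod s.
Proof. exact: big_cons. Qed.

Lemma zprod_cat s1 s2 : zprod (s1 ++ s2) = zprod s1 * zprod s2.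
Proof. exact: big_cat. Qed.

Lemma mul_z_zprod a u : z a * zprod u = (-1) ^+ size u * (zprod u * z a).
Proof.
elim: u => [|b u IH]; first by rewrite zprod_nil mul1r mulr1 expr0 mul1r.
rewrite !zprod_cons [LHS]mulrA zA mulNr -mulrA IH /= exprS mulN1r mulNr.
by congr (- _); rewrite !mulrA (commr_sign (z b)).
Qed.

Lemma zprod_swap u w :
  zprod u * zprod w = (-1) ^+ (size u * size w) * (zprod w * zprod u).
Proof.
elim: u => [|a u IH]; first by rewrite zprod_nil mul1r mulr1 mul0n expr0 mul1r.
rewrite zprod_cons -mulrA IH !mulrA (commr_sign (z a)) -!mulrA.
rewrite (mulrA (z a)) (mul_z_zprod a w) /= mulSn exprD !mulrA -!exprD.
by rewrite addnC.
Qed.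

Lemma zprod_not_uniq s : ~~ uniq s -> zprod s = 0.
Proof.
elim: s => [|a s IH] //=; rewrite negb_and negbK zprod_cons.
case/orP => [/splitPr [s1 s2]|/IH ->]; last by rewrite mulr0.
by rewrite zprod_cat zprod_cons mulrA mul_z_zprod -!mulrA (mulrA (z a)) zz mul0r !mulr0.
Qed.

Definition supp_in (k : nat) (s : seq nat) : bool := all (fun j => 0 < j <= k)%N s.

Lemma supp_in_cat k s1 s2 : supp_in k (s1 ++ s2) = supp_in k s1 && supp_in k s2.
Proof. exact: all_cat. Qed.

Lemma zprod_oversize k s : supp_in k s -> (k < size s)%N -> zprod s = 0.
Proof.
move=> /allP hs hk; apply: zprod_not_uniq; apply/negP => us.
have : (size s <= size (iota 1 k))%N.
  apply: uniq_leq_size => // j /hs /andP [j0 jk].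
  by rewrite mem_iota j0 add1n ltnS.
by rewrite size_iota leqNgt hk.
Qed.

End ZMonomials.

Section ZDegree.
Variables (K : fieldType) (R : pzRingType) (central : R -> Prop) (z : nat -> R) (k : nat).
Hypotheses (centralD : forall x y, central x -> central y -> central (x + y))
  (centralN : forall x, central x -> central (- x))
  (centralM : forall x y, central x -> central y -> central (x * y))
  (central_z : forall x j, central x -> x * z j = z j * x).

Local Notation zprod := (zprod z).

Lemma central_zprod x s : central x -> x * zprod s = zprod s * x.
Proof.
move=> hx; elim: s => [|j s IH]; first by rewrite zprod_nil mul1r mulr1.
by rewrite zprod_cons mulrA central_z // -mulrA IH mulrA.
Qed.

Definition zcomb (L : seq (R * seq nat)) : R := \sum_(p <- L) p.1 * zprod p.2.

Definition zdeg_ge (d : nat) (r : R) : Prop :=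
  exists L, r = zcomb L /\
    forall p, p \in L -> [/\ central p.1, supp_in k p.2 & (d <= size p.2)%N].

Lemma zdeg_ge0 d : zdeg_ge d 0.
Proof. by exists [::]; rewrite /zcomb big_nil. Qed.

Lemma zdeg_geD d x y : zdeg_ge d x -> zdeg_ge d y -> zdeg_ge d (x + y).
Proof.
move=> [L1 [-> h1]] [L2 [-> h2]]; exists (L1 ++ L2); split; first by rewrite /zcomb big_cat.
by move=> p; rewrite mem_cat => /orP []; [apply: h1 | apply: h2].
Qed.

Lemma zdeg_ge_sum d (I : eqType) (r : seq I) (F : I -> R) :
  (forall i, i \in r -> zdeg_ge d (F i)) -> zdeg_ge d (\sum_(i <- r) F i).
Proof.
elim: r => [|i r IH] h; first by rewrite big_nil; apply: zdeg_ge0.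
rewrite big_cons; apply: zdeg_geD; first by apply: h; rewrite mem_head.
by apply: IH => j jr; apply: h; rewrite inE jr orbT.
Qed.

Lemma zdeg_ge_monomial d a s :
  central a -> supp_in k s -> (d <= size s)%N -> zdeg_ge d (a * zprod s).
Proof.
move=> *; exists [:: (a, s)]; split; first by rewrite /zcomb big_seq1.
by move=> p; rewrite inE => /eqP ->.
Qed.

Lemma zdeg_geM a b x y : zdeg_ge a x -> zdeg_ge b y -> zdeg_ge (a + b) (x * y).
Proof.
move=> [L1 [-> h1]] [L2 [-> h2]].
rewrite /zcomb big_distrl /=; apply: zdeg_ge_sum => p /h1 [cp sp dp].
rewrite big_distrr /=; apply: zdeg_ge_sum => q /h2 [cq sq dq].
rewrite -mulrA (mulrA (zprod _)) -central_zprod // -!mulrA -zprod_cat mulrA.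
apply: zdeg_ge_monomial; [exact: centralM | by rewrite supp_in_cat sp | ].
by rewrite size_cat leq_add.
Qed.

Hypotheses (zA : forall i j, z i * z j = - (z j * z i))
  (zz : forall i, z i * z i = 0).

Lemma zdeg_ge_eq0 d r : zdeg_ge d r -> (k < d)%N -> r = 0.
Proof.
move=> [L [-> h]] hd; rewrite /zcomb big1_seq // => p /andP [_ /h [_ sp dp]].
by rewrite (zprod_oversize zA zz sp) ?mulr0 // (leq_trans hd).
Qed.

Hypothesis (central_comm : forall x y, central x -> central y -> x * y = y * x).

(* Two monomials commute unless both have odd degree, and then their
   commutator is twice their product. *)
Lemma zdeg2_comm_monomial a b u w : central a -> central b ->
  supp_in k u -> supp_in k w ->
  zdeg_ge 2 (a * zprod u * (b * zprod w) - b * zprod w * (a * zprod u)).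
Proof.
move=> ca cb su sw.
have mul_monomials x y s t : central y ->
    x * zprod s * (y * zprod t) = x * y * (zprod s * zprod t).
  by move=> cy; rewrite -mulrA (mulrA (zprod s)) -(central_zprod s cy) !mulrA.
rewrite !mul_monomials // (central_comm cb ca) -mulrBr [zprod w * _](zprod_swap zA).
rewrite -signr_odd oddM andbC.
case: (boolP (odd (size u) && odd (size w))) => [/andP [ou ow]|_]; last first.
  by rewrite mul1r subrr mulr0; apply: zdeg_ge0.
rewrite mulN1r opprK -mulr2n mulrnAr -mulrnAl -zprod_cat.
apply: zdeg_ge_monomial; [by rewrite mulr2n; apply: centralD; apply: centralM | |].
  by rewrite supp_in_cat su.
have pos_odd m : odd m -> (0 < m)%N by case: m.
by rewrite size_cat; move: (pos_odd _ ou) (pos_odd _ ow); lia.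
Qed.

Variables (cst : K -> R) (c : nat -> R).
Hypotheses (central1 : central 1) (central_cst : forall a, central (cst a))
  (central_c : forall j, central (c j)).

Fixpoint nc_eval (g : nat -> R) (t : ncterm K) : R :=
  match t with
  | NVar i => g i
  | NConst a => cst a
  | NAdd t1 t2 => nc_eval g t1 + nc_eval g t2
  | NOpp t1 => - nc_eval g t1
  | NMul t1 t2 => nc_eval g t1 * nc_eval g t2
  end.

Lemma central_nc_eval g t : (forall i, central (g i)) -> central (nc_eval g t).
Proof. by move=> cg; elim: t => /= *; auto. Qed.

Fixpoint expand (t : ncterm K) : seq (R * seq nat) :=
  match t with
  | NVar i => [:: (c i, [::]); (1, [:: i])]
  | NConst a => [:: (cst a, [::])]
  | NAdd t1 t2 => expand t1 ++ expand t2
  | NOpp t1 => [seq (- p.1, p.2) | p <- expand t1]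
  | NMul t1 t2 => [seq (p.1 * q.1, p.2 ++ q.2) | p <- expand t1, q <- expand t2]
  end.

Lemma expand_central t p : p \in expand t -> central p.1.
Proof.
elim: t p => [i|a|t1 IH1 t2 IH2|t1 IH1|t1 IH1 t2 IH2] p /=.
- by rewrite !inE => /orP [] /eqP ->; [apply: central_c |].
- by rewrite inE => /eqP ->; apply: central_cst.
- by rewrite mem_cat => /orP []; [apply: IH1 | apply: IH2].
- by case/mapP => q /IH1 ? ->; apply: centralN.
- by case/allpairsP => [[q1 q2] [/IH1 ? /IH2 ? ->]]; apply: centralM.
Qed.

Lemma expand_supp t p : nvars_in k t -> p \in expand t -> supp_in k p.2.
Proof.
elim: t p => [i|a|t1 IH1 t2 IH2|t1 IH1|t1 IH1 t2 IH2] p /=.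
- by move=> hi; rewrite !inE => /orP [] /eqP -> //=; rewrite /supp_in /= andbT.
- by move=> _; rewrite inE => /eqP ->.
- by case/andP=> h1 h2; rewrite mem_cat => /orP []; [apply: IH1 | apply: IH2].
- by move=> h /mapP [q /(IH1 _ h) ? ->].
- case/andP=> h1 h2 /allpairsP [[q1 q2] [i1 i2 ->]] /=.
  by rewrite supp_in_cat (IH1 _ h1 i1) (IH2 _ h2 i2).
Qed.

Lemma nc_eval_expand g : (forall i, g i = c i + z i) ->
  forall t, nc_eval g t = zcomb (expand t).
Proof.
move=> gE; elim=> [i|a|t1 IH1 t2 IH2|t1 IH1|t1 IH1 t2 IH2] /=.
- by rewrite gE /zcomb !big_cons big_nil !zprod_cons !zprod_nil !mulr1 mul1r addr0.
- by rewrite /zcomb big_seq1 zprod_nil mulr1.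
- by rewrite /zcomb big_cat IH1 IH2.
- by rewrite IH1 /zcomb big_map -sumrN; apply: eq_bigr => p _; rewrite mulNr.
- rewrite IH1 IH2 /zcomb big_allpairs_dep mulr_suml; apply: eq_big_seq => p _.
  rewrite mulr_sumr; apply: eq_big_seq => q /expand_central cq /=.
  by rewrite zprod_cat -mulrA (mulrA (zprod _)) -(central_zprod _ cq) !mulrA.
Qed.

Lemma comm_zdeg2 g t1 t2 : (forall i, g i = c i + z i) ->
  nvars_in k t1 -> nvars_in k t2 -> zdeg_ge 2 (nc_eval g (ncomm t1 t2)).
Proof.
move=> gE h1 h2; rewrite /ncomm /= !(nc_eval_expand gE) /zcomb.
rewrite !mulr_suml; under eq_bigr => p _ do rewrite mulr_sumr.
under [X in _ - X]eq_bigr => q _ do rewrite mulr_sumr.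
rewrite [X in _ - X]exchange_big /= -sumrB.
apply: zdeg_ge_sum => p pt1; rewrite -sumrB.
apply: zdeg_ge_sum => q qt2; apply: zdeg2_comm_monomial;
  by [exact: expand_central pt1 | exact: expand_central qt2
     | exact: expand_supp h1 pt1 | exact: expand_supp h2 qt2].
Qed.

End ZDegree.

Section GrassParts.
Variable K : fieldType.

Definition even_terms (x : grass K) : bool := all (fun p => ~~ odd (size p.1)) x.
Definition odd_terms (x : grass K) : bool := all (fun p => odd (size p.1)) x.

Definition even_part (x : grass K) := filter (fun p => ~~ odd (size p.1)) x.
Definition odd_part (x : grass K) := filter (fun p => odd (size p.1)) x.

Lemma even_terms_even_part x : even_terms (even_part x).
Proof. by apply/allP => p; rewrite mem_filter => /andP []. Qed.

Lemma odd_terms_odd_part x : odd_terms (odd_part x).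
Proof. by apply/allP => p; rewrite mem_filter => /andP []. Qed.

Lemma even_terms_gadd x y : even_terms x -> even_terms y -> even_terms (gadd x y).
Proof. by rewrite /even_terms all_cat => -> ->. Qed.

Lemma even_terms_gopp x : even_terms x -> even_terms (gopp x).
Proof. by rewrite /even_terms all_map. Qed.

Lemma even_terms_gmul x y : even_terms x -> even_terms y -> even_terms (gmul x y).
Proof.
move=> /allP hx /allP hy; apply/allP => _ /allpairsP [[p q] [/hx /= hp /hy /= hq ->]].
by rewrite /= size_cat oddD (negbTE hp) (negbTE hq).
Qed.

Lemma gzero_odd_part x : geven x -> gzero (odd_part x).
Proof.
move=> hx S; rewrite /gcoef /odd_part big_filter_cond.
have [oS|eS] := boolP (odd (size S)).
  rewrite -[RHS](hx S oS) /gcoef; apply: eq_bigl => p.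
  case: (boolP (uniq p.1 && (sort leq p.1 == S))) => [/andP [_ /eqP e]|];
    last by rewrite andbF.
  by rewrite andbT -(size_sort leq) e.
rewrite big1 // => p /andP [op /andP [_ /eqP e]].
by move: eS; rewrite -e size_sort op.
Qed.

End GrassParts.

(* E acts faithfully on the exterior algebra of [K^N] for [N] large, which we
   realise by matrices indexed by the subsets of ['I_N]: the basis vector of
   [T] is [e_T], the product of the [e_i], [i \in T], in increasing order. *)
Section ExteriorMatrices.
Variables (K : fieldType) (N : nat).
Local Notation ST := {set 'I_N}.
Definition ext_dim := #|{: ST}|.
Local Notation R := 'M[K]_ext_dim.

Definition ent (M : R) (U T : ST) : K := M (enum_rank U) (enum_rank T).
Definition mx_of (f : ST -> ST -> K) : R := \matrix_(i, j) f (enum_val i) (enum_val j).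

Lemma ent_mx_of f U T : ent (mx_of f) U T = f U T.
Proof. by rewrite /ent /mx_of mxE !enum_rankK. Qed.

Lemma entP (A B : R) : (forall U T, ent A U T = ent B U T) -> A = B.
Proof.
by move=> h; apply/matrixP => i j; rewrite -(enum_valK i) -(enum_valK j); apply: h.
Qed.

Lemma ent_mul (A B : R) U T : ent (A * B) U T = \sum_(V : ST) ent A U V * ent B V T.
Proof. by rewrite /ent mxE (reindex enum_rank) //; apply: onW_bij; apply: enum_rank_bij. Qed.

Lemma ent_add (A B : R) U T : ent (A + B) U T = ent A U T + ent B U T.
Proof. by rewrite /ent mxE. Qed.

Lemma ent_opp (A : R) U T : ent (- A) U T = - ent A U T.
Proof. by rewrite /ent mxE. Qed.

Lemma ent_scale a (A : R) U T : ent (a *: A) U T = a * ent A U T.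
Proof. by rewrite /ent mxE. Qed.

Lemma ent1 U T : ent 1 U T = (U == T)%:R.
Proof. by rewrite /ent mxE (inj_eq enum_rank_inj). Qed.

Lemma ent0 U T : ent 0 U T = 0.
Proof. by rewrite /ent mxE. Qed.

Lemma ent_sum (I : Type) (r : seq I) (F : I -> R) U T :
  ent (\sum_(i <- r) F i) U T = \sum_(i <- r) ent (F i) U T.
Proof.
elim: r => [|i r IH]; first by rewrite !big_nil ent0.
by rewrite !big_cons ent_add IH.
Qed.

Definition seq_of (V : ST) : seq nat := [seq val i | i in V].
Definition sorted_seq_of (V : ST) : seq nat := sort leq (seq_of V).
Definition set_of (w : seq nat) : ST := [set i : 'I_N | val i \in w].

Lemma seq_of_uniq V : uniq (seq_of V).
Proof. by rewrite /seq_of map_inj_uniq ?enum_uniq //; apply: val_inj. Qed.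

Lemma mem_seq_of V (i : 'I_N) : (val i \in seq_of V) = (i \in V).
Proof. by rewrite /seq_of mem_map ?mem_enum //; apply: val_inj. Qed.

Lemma seq_of_lt V x : x \in seq_of V -> (x < N)%N.
Proof. by move=> /imageP [i _ ->]; apply: ltn_ord. Qed.

Lemma mem_seq_ofE x (V : ST) : (x \in seq_of V) = [exists i in V, val i == x].
Proof.
apply/idP/existsP => [/imageP [i iV ->]|[i /andP [iV /eqP <-]]].
  by exists i; rewrite iV eqxx.
by rewrite mem_seq_of.
Qed.

Lemma set_of_cons a w : set_of (a :: w) = set_of [:: a] :|: set_of w.
Proof. by apply/setP => i; rewrite !inE. Qed.

Lemma card_set_of w : uniq w -> all (fun a => a < N)%N w -> #|set_of w| = size w.
Proof.
elim: w => [|a w IH] /=.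
  by move=> _ _; apply/eqP; rewrite cards_eq0; apply/eqP/setP => i; rewrite !inE.
case/andP => aw uw /andP [aN allw].
have -> : set_of (a :: w) = Ordinal aN |: set_of w by apply/setP => i; rewrite !inE -val_eqE.
by rewrite cardsU1 IH // inE /= aw.
Qed.

Definition n_below (T : ST) (a : nat) : nat := #|[set b in T | (val b < a)%N]|.
Definition crossings (w : seq nat) (T : ST) : nat := \sum_(a <- w) n_below T a.

(* Left multiplication by [e_a]: [e_a e_T = (-1)^(n_below T a) e_(a |: T)]. *)
Definition gen_ent (a : nat) (U T : ST) : K :=
  if [&& (a < N)%N, a \notin seq_of T & U == set_of [:: a] :|: T]
  then (-1) ^+ n_below T a else 0.
Definition gen_mx (a : nat) : R := mx_of (gen_ent a).
Local Notation word_mx := (zprod gen_mx).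

Definition word_fits (w : seq nat) (T : ST) : bool :=
  [&& all (fun a => a < N)%N w, uniq w & [forall b in T, val b \notin w]].

Lemma word_fits_cons a w T : word_fits (a :: w) T =
  [&& (a < N)%N, a \notin w, a \notin seq_of T & word_fits w T].
Proof.
rewrite /word_fits /= mem_seq_ofE.
have -> : [forall b in T, val b \notin a :: w] =
    ~~ [exists b in T, val b == a] && [forall b in T, val b \notin w].
  rewrite negb_exists; apply/forallP/andP => [h|[/forallP h1 /forallP h2] b].
    by split; apply/forallP => b; move: (h b); rewrite inE negb_or;
      case: (b \in T) => //= /andP [].
  by move: (h1 b) (h2 b); rewrite inE negb_or; case: (b \in T) => //= -> ->.
by case: (a < N)%N; case: (a \in w); case: (uniq w); case: [exists _ in _, _]; case: (all _ _).
Qed.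

Lemma n_below_setU w T a : word_fits w T ->
  n_below (set_of w :|: T) a = (count (fun b => b < a) w + n_below T a)%N.
Proof.
case/and3P => hall hu hd; rewrite /n_below.
have -> : [set b in set_of w :|: T | (val b < a)%N] =
    set_of (filter (fun b => b < a)%N w) :|: [set b in T | (val b < a)%N].
  by apply/setP => i; rewrite !inE mem_filter andb_orl andbC.
rewrite cardsU card_set_of ?filter_uniq ?all_filter //; last first.
  by apply/allP => x xw; apply/implyP => _; move/allP: hall; apply.
have -> : set_of (filter (fun b => b < a)%N w) :&: [set b in T | (val b < a)%N] = set0.
  apply/setP => i; rewrite !inE mem_filter; apply/negP => /and3P [/andP [_ iw] iT _].
  by move/forallP: hd => /(_ i); rewrite iT iw.
by rewrite cards0 subn0 size_filter.
Qed.

Lemma ent_word_mx w U T : ent (word_mx w) U T =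
  if word_fits w T && (U == set_of w :|: T) then (-1) ^+ (ginv w + crossings w T) else 0.
Proof.
elim: w U => [|a w IH] U.
  rewrite zprod_nil ent1 /word_fits /= /crossings big_nil.
  have -> : set_of [::] = set0 by apply/setP => i; rewrite !inE.
  rewrite set0U; case: (U == T); rewrite ?andbF //= andbT.
  by have -> : [forall b in T, val b \notin [::]] by apply/forallP => b; apply/implyP.
rewrite zprod_cons ent_mul.
case hw: (word_fits w T); last first.
  rewrite big1; first by rewrite word_fits_cons hw !andbF.
  by move=> V _; rewrite IH hw /= mulr0.
rewrite (bigD1 (set_of w :|: T)) //= big1 ?addr0; last first.
  by move=> V /negbTE hV; rewrite IH hw hV /= mulr0.
rewrite IH hw eqxx /= /gen_mx ent_mx_of /gen_ent word_fits_cons hw andbT.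
case aN: (a < N)%N => /=; last by rewrite mul0r.
have -> : (a \notin seq_of (set_of w :|: T)) = (a \notin w) && (a \notin seq_of T).
  rewrite !mem_seq_ofE -negb_or; congr (~~ _); apply/existsP/orP.
    case=> b /andP []; rewrite inE => /orP [bw|bT] /eqP ba.
      by left; rewrite -ba; move: bw; rewrite inE.
    by right; apply/existsP; exists b; rewrite bT ba eqxx.
  case=> [aw|/existsP [b /andP [bT ba]]].
    by exists (Ordinal aN); rewrite !inE aw eqxx.
  by exists b; rewrite inE bT orbT.
rewrite setUA -set_of_cons.
case: (_ && _) => /=; last by rewrite mul0r.
by rewrite -exprD n_below_setU // /crossings big_cons /=; congr (_ ^+ _); lia.
Qed.

Lemma gen_mx_anti a b : gen_mx a * gen_mx b = - (gen_mx b * gen_mx a).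
Proof.
have word2 c d : gen_mx c * gen_mx d = word_mx [:: c; d].
  by rewrite !zprod_cons zprod_nil mulr1.
apply: entP => U T; rewrite ent_opp !word2 !ent_word_mx.
have -> : set_of [:: b; a] = set_of [:: a; b] by apply/setP => i; rewrite !inE orbC.
rewrite !word_fits_cons !inE.
have [<-|ab] := eqVneq a b; first by rewrite /= !andbF oppr0.
rewrite !in_nil /=.
case: (a < N)%N; case: (b < N)%N; case: (a \notin _); case: (b \notin _); rewrite /= ?oppr0 //.
case: (_ && _); last by rewrite oppr0.
rewrite /crossings !big_cons big_nil /=.
have e : ((b < a) + (a < b) = 1)%N by case: (ltngtP a b) ab => //; rewrite eqxx.
set E1 := (_ + _ + _ + _)%N; set E2 := (_ + _ + _ + _)%N.
rewrite -(mulN1r ((-1) ^+ E2)) -exprS.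
have -> : E2.+1 = (E1 + 2 * (a < b))%N by rewrite /E1 /E2; lia.
by rewrite exprD exprM sqrrN expr1n expr1n mulr1.
Qed.

Definition grass_mx (x : grass K) : R := \sum_(p <- x) p.2 *: word_mx p.1.

Lemma grass_mxD x y : grass_mx (gadd x y) = grass_mx x + grass_mx y.
Proof. by rewrite /grass_mx /gadd big_cat. Qed.

Lemma grass_mxN x : grass_mx (gopp x) = - grass_mx x.
Proof. by rewrite /grass_mx /gopp big_map -sumrN; apply: eq_bigr => p _; rewrite scaleNr. Qed.

Lemma grass_mx_const a : grass_mx (gconst a) = a *: (1 : R).
Proof. by rewrite /grass_mx big_seq1 zprod_nil. Qed.

Lemma grass_mx_mulE x y : grass_mx x * grass_mx y =
  \sum_(p <- x) \sum_(q <- y) (p.2 * q.2) *: (word_mx p.1 * word_mx q.1).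
Proof.
rewrite /grass_mx mulr_suml; apply: eq_bigr => p _; rewrite mulr_sumr; apply: eq_bigr => q _.
by rewrite -!mulmxE -scalemxAl -scalemxAr scalerA.
Qed.

Lemma grass_mxM x y : grass_mx (gmul x y) = grass_mx x * grass_mx y.
Proof.
rewrite grass_mx_mulE /grass_mx /gmul big_allpairs_dep.
by apply: eq_bigr => p _; apply: eq_bigr => q _; rewrite zprod_cat.
Qed.

Lemma grass_mx_split x : grass_mx x = grass_mx (even_part x) + grass_mx (odd_part x).
Proof.
rewrite /grass_mx [LHS](bigID (fun p : seq nat * K => odd (size p.1))) /= addrC.
by rewrite /even_part /odd_part !big_filter.
Qed.

Lemma grass_mx_even_comm x y :
  even_terms x -> grass_mx x * grass_mx y = grass_mx y * grass_mx x.
Proof.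
move=> /allP hx; rewrite !grass_mx_mulE exchange_big /=; apply: eq_bigr => q _.
apply: eq_big_seq => p /hx hp; rewrite mulrC (zprod_swap gen_mx_anti).
by rewrite -signr_odd oddM (negbTE hp) /= expr0 mul1r.
Qed.

Lemma grass_mx_odd_anti x y : odd_terms x -> odd_terms y ->
  grass_mx x * grass_mx y = - (grass_mx y * grass_mx x).
Proof.
move=> /allP hx /allP hy; rewrite !grass_mx_mulE exchange_big /= -sumrN.
apply: eq_big_seq => q /hy hq; rewrite -sumrN; apply: eq_big_seq => p /hx hp.
by rewrite mulrC (zprod_swap gen_mx_anti) -signr_odd oddM hp hq /= expr1 mulN1r scalerN.
Qed.

Lemma word_fitsE w (U T : ST) : T \subset U ->
  (word_fits w T && (U == set_of w :|: T)) =
  uniq w && (sort leq w == sorted_seq_of (U :\: T)).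
Proof.
move=> TU; have sortP := perm_sortP leq_total leq_trans anti_leq.
have -> : (sort leq w == sorted_seq_of (U :\: T)) = perm_eq w (seq_of (U :\: T)).
  by apply/eqP/idP => /sortP.
rewrite /word_fits; case uw: (uniq w); last by rewrite /= andbF.
rewrite /=; apply/idP/idP.
  case/andP => /andP [hall hd] /eqP hU.
  apply: uniq_perm => // [|x]; first exact: seq_of_uniq.
  apply/idP/idP => hx.
    have xN : (x < N)%N by move/allP: hall; apply.
    have -> : x = val (Ordinal xN) by [].
    rewrite mem_seq_of !inE hU !inE /= hx andbT.
    by apply/negP => hT; move/forallP: hd => /(_ (Ordinal xN)); rewrite hT /= hx.
  have xN := seq_of_lt hx; move: hx; have -> : x = val (Ordinal xN) by [].
  by rewrite mem_seq_of !inE hU !inE => /andP [/negbTE ->]; rewrite orbF.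
move=> hp; have memw x : (x \in w) = (x \in seq_of (U :\: T)) by apply: perm_mem.
have -> : all (fun a => a < N)%N w by apply/allP => x; rewrite memw; apply: seq_of_lt.
rewrite /=; apply/andP; split.
  by apply/forallP => b; apply/implyP => bT; rewrite memw mem_seq_of !inE bT.
apply/eqP/setP => i; rewrite !inE memw mem_seq_of !inE.
by case iT: (i \in T) => /=; rewrite ?orbT ?orbF //; apply: (subsetP TU _ iT).
Qed.

Lemma ent_grass_mx x (U T : ST) : T \subset U ->
  ent (grass_mx x) U T =
  (-1) ^+ crossings (sorted_seq_of (U :\: T)) T * gcoef x (sorted_seq_of (U :\: T)).
Proof.
move=> TU; rewrite /grass_mx ent_sum /gcoef mulr_sumr [RHS]big_mkcond /=.
apply: eq_bigr => p _; rewrite ent_scale ent_word_mx word_fitsE //.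
case: ifP => [/andP [up /eqP <-]|_]; last by rewrite mulr0.
rewrite /crossings (perm_big _ (permEl (perm_sort leq p.1))) /gsign exprD.
by rewrite [LHS]mulrC [RHS]mulrA [X in _ = X * _]mulrC.
Qed.

Lemma ent_grass_mx_notsub x (U T : ST) : ~~ (T \subset U) -> ent (grass_mx x) U T = 0.
Proof.
move=> TU; rewrite /grass_mx ent_sum big1 // => p _; rewrite ent_scale ent_word_mx.
case: ifP => [/andP [_ /eqP hU]|_]; last by rewrite mulr0.
by move: TU; rewrite hU subsetUr.
Qed.

Lemma grass_mx_eq0 x : gzero x -> grass_mx x = 0.
Proof.
move=> hz; apply: entP => U T; rewrite ent0.
have [TU|TU] := boolP (T \subset U); first by rewrite ent_grass_mx // hz mulr0.
exact: ent_grass_mx_notsub.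
Qed.

End ExteriorMatrices.

Lemma grass_mx_faithful (K : fieldType) (x : grass K) :
  (forall N, grass_mx N x = 0) -> gzero x.
Proof.
move=> h S.
have [/andP [uS sS]|hS] := boolP (uniq S && sorted leq S); last first.
  rewrite /gcoef big1_seq // => p /andP [/andP [up /eqP e] _]; exfalso.
  by move: hS; rewrite -e sort_uniq up sort_sorted //; apply: leq_total.
pose N := (\max_(a <- S) a).+1.
have SN a : a \in S -> (a < N)%N.
  by move=> aS; rewrite ltnS (@leq_bigmax_seq _ S xpredT (fun a => a) a aS).
have sortS : sorted_seq_of (set_of N S) = S.
  rewrite /sorted_seq_of -{2}(sorted_sort leq_trans sS).
  apply/(perm_sortP leq_total leq_trans anti_leq)/uniq_perm => // [|y].
    exact: seq_of_uniq.
  apply/idP/idP => [/imageP [i]|yS]; first by rewrite inE => iS ->.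
  by have -> : y = val (Ordinal (SN y yS)) by []; rewrite mem_seq_of inE.
have := congr1 (fun M => ent M (set_of N S) set0) (h N).
rewrite ent_grass_mx ?sub0set // ent0 setD0 sortS.
suff -> : crossings S (set0 : {set 'I_N}) = 0%N by rewrite expr0 mul1r.
rewrite /crossings big1 // => a _; apply/eqP; rewrite /n_below cards_eq0.
by apply/eqP/setP => i; rewrite !inE.
Qed.

Section Evaluation.
Variables (K : fieldType) (N : nat) (v : nat -> tri K).
Hypotheses (v_inA : forall i, inA (v i)) (two_neq0 : (2%:R : K) != 0).
Local Notation R := 'M[K]_(ext_dim N).
Local Notation H := (@grass_mx K N).

Definition even_mx (r : R) : Prop := exists x, even_terms x /\ r = H x.
Definition cst_mx (a : K) : R := H (gconst a).
Definition entry11 j : R := H (t11 (v j)).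
Definition entry22 j : R := H (t22 (v j)).
Definition even22 j : R := H (even_part (t22 (v j))).
Definition odd22 j : R := H (odd_part (t22 (v j))).

Lemma even_mxD x y : even_mx x -> even_mx y -> even_mx (x + y).
Proof.
move=> [a [ha ->]] [b [hb ->]]; exists (gadd a b).
by rewrite grass_mxD even_terms_gadd.
Qed.

Lemma even_mxN x : even_mx x -> even_mx (- x).
Proof. by move=> [a [ha ->]]; exists (gopp a); rewrite grass_mxN even_terms_gopp. Qed.

Lemma even_mxM x y : even_mx x -> even_mx y -> even_mx (x * y).
Proof.
move=> [a [ha ->]] [b [hb ->]]; exists (gmul a b).
by rewrite grass_mxM even_terms_gmul.
Qed.

Lemma even_mx_cst a : even_mx (cst_mx a).
Proof. by exists (gconst a). Qed.

Lemma even_mx1 : even_mx 1.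
Proof. by exists (gconst 1); rewrite grass_mx_const scale1r. Qed.

Lemma even_mx_comm x y : even_mx x -> even_mx y -> x * y = y * x.
Proof. by move=> [a [ha ->]] [b [_ ->]]; apply: grass_mx_even_comm. Qed.

Lemma even_mx_odd22_comm x j : even_mx x -> x * odd22 j = odd22 j * x.
Proof. by move=> [a [ha ->]]; apply: grass_mx_even_comm. Qed.

Lemma odd22_anti i j : odd22 i * odd22 j = - (odd22 j * odd22 i).
Proof. by apply: grass_mx_odd_anti; apply: odd_terms_odd_part. Qed.

Lemma odd22_sqr i : odd22 i * odd22 i = 0.
Proof.
have : (2%:R : K) *: (odd22 i * odd22 i) = 0.
  by rewrite scaler_nat mulr2n {1}odd22_anti addNr.
by move/eqP; rewrite scaler_eq0 (negbTE two_neq0) => /eqP.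
Qed.

Lemma even_mx_even22 j : even_mx (even22 j).
Proof. by exists (even_part (t22 (v j))); rewrite even_terms_even_part. Qed.

Lemma even_mx_entry11 j : even_mx (entry11 j).
Proof.
exists (even_part (t11 (v j))); rewrite even_terms_even_part.
by rewrite /entry11 grass_mx_split (grass_mx_eq0 N (gzero_odd_part (v_inA j))) addr0.
Qed.

Lemma entry22E j : entry22 j = even22 j + odd22 j.
Proof. exact: grass_mx_split. Qed.

Lemma grass_mx_t11_evalA t : H (t11 (evalA v t)) = nc_eval cst_mx entry11 t.
Proof. by elim: t => //= *; rewrite ?grass_mxD ?grass_mxN ?grass_mxM; congr (_ _ _). Qed.

Lemma grass_mx_t22_evalA t : H (t22 (evalA v t)) = nc_eval cst_mx entry22 t.
Proof. by elim: t => //= *; rewrite ?grass_mxD ?grass_mxN ?grass_mxM; congr (_ _ _). Qed.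

Lemma grass_mx_t12_tmul a b :
  H (t12 (tmul a b)) = H (t11 a) * H (t12 b) + H (t12 a) * H (t22 b).
Proof. by rewrite grass_mxD !grass_mxM. Qed.

Variables (k : nat) (s : nat -> ncterm K).
Hypothesis s_vars : forall i, nvars_in k (s i).
Local Notation zdeg := (zdeg_ge even_mx odd22 k).

Definition cprod_val j := evalA v (nsubst s (cprod K j)).
Definition comm_val j := evalA v (ncomm (s (2 * j).+1) (s (2 * j).+2)).

Lemma cprod_valS j : cprod_val j.+1 = tmul (cprod_val j) (comm_val j).
Proof. by []. Qed.

Lemma comm_val11 j : H (t11 (comm_val j)) = 0.
Proof.
have central11 t : even_mx (nc_eval cst_mx entry11 t).
  exact: (central_nc_eval even_mxD even_mxN even_mxM even_mx_cst t even_mx_entry11).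
by rewrite grass_mx_t11_evalA /= (even_mx_comm (central11 _) (central11 _)) subrr.
Qed.

Lemma comm_val22 j : zdeg 2 (H (t22 (comm_val j))).
Proof.
rewrite grass_mx_t22_evalA.
exact: (comm_zdeg2 even_mxD even_mxN even_mxM even_mx_odd22_comm odd22_anti
  even_mx_comm even_mx1 even_mx_cst even_mx_even22 entry22E (s_vars _) (s_vars _)).
Qed.

Lemma cprod_val22 j : zdeg (2 * j) (H (t22 (cprod_val j))).
Proof.
elim: j => [|j IH].
  rewrite /cprod_val /= -[H _]mulr1 -(zprod_nil odd22).
  by apply: (zdeg_ge_monomial odd22 (even_mx_cst 1)).
rewrite cprod_valS /= grass_mxM mulnSr.
exact: (zdeg_geM even_mxM even_mx_odd22_comm IH (comm_val22 j)).
Qed.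

Lemma cprod_val11 j : H (t11 (cprod_val j.+1)) = 0.
Proof. by rewrite cprod_valS /= grass_mxM comm_val11 mulr0. Qed.

Lemma cprod_val12 j : exists b D, H (t12 (cprod_val j.+1)) = b * D /\ zdeg (2 * j) D.
Proof.
elim: j => [|j [b [D [hb hD]]]].
  exists (H (t12 (cprod_val 1))), 1; split; first by rewrite mulr1.
  by rewrite -[1]mulr1 -{2}(zprod_nil odd22); apply: (zdeg_ge_monomial odd22 even_mx1).
exists b, (D * H (t22 (comm_val j.+1))); split.
  by rewrite cprod_valS grass_mx_t12_tmul cprod_val11 mul0r add0r hb mulrA.
by rewrite mulnSr; apply: (zdeg_geM even_mxM even_mx_odd22_comm hD (comm_val22 _)).
Qed.

Lemma cprod_val_mx_eq0 m : (k < 2 * m)%N ->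
  [/\ H (t11 (cprod_val m.+1)) = 0, H (t12 (cprod_val m.+1)) = 0
     & H (t22 (cprod_val m.+1)) = 0].
Proof.
move=> hk; split; first exact: cprod_val11.
  have [b [D [-> hD]]] := cprod_val12 m.
  by rewrite (zdeg_ge_eq0 odd22_anti odd22_sqr hD hk) mulr0.
by apply: (zdeg_ge_eq0 odd22_anti odd22_sqr (cprod_val22 m.+1)); rewrite mulnS; lia.
Qed.

End Evaluation.

Lemma cprod_PI_of_F (K : fieldType) (two_neq0 : (2%:R : K) != 0) k m :
  (k < 2 * m)%N -> PI_of_F k (cprod K m.+1).
Proof.
move=> hk s hs v hv.
have eq0 N := cprod_val_mx_eq0 N hv two_neq0 hs hk.
by split; apply: grass_mx_faithful => N; case: (eq0 N).
Qed.

Local Close Scope ring_scope.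

Theorem proposition3p3 (K : fieldType) (charK0 : [pchar K]%R =i pred0)
    (n : nat) (hn : (2 <= n)%N) (hev : ~~ odd n) :
  PI_of_F n (cprod K (n./2 + 2)) /\ PI_of_F n.+1 (cprod K (n./2 + 2)).
Proof.
have two_neq0 : (2%:R : K)%R != 0%R by move/pcharf0P: charK0 => ->.
have n_half : n = (n./2).*2 by rewrite halfK (negbTE hev) subn0.
rewrite addn2; split; apply: cprod_PI_of_F => //; rewrite n_half -mul2n; lia.
Qed.
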